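(* Let $m\in\mathbb{N}$, $A=\langle a\rangle\le\mathrm{Sym}(3)$ with $a=(1\,2\,3)$, $B=(\mathbb{Z}/3\mathbb{Z})^m$, and let $\omega=\omega_0\omega_1\omega_2\dots$ be a sequence of epimorphisms $\omega_i\colon B\to A$ with $\bigcap_{i\ge k}\ker(\omega_i)=\{1\}$ for every $k\in\mathbb{N}$. Let $l\in\mathbb{N}$ be the smallest integer such that $\bigcap_{i=0}^{l}\ker(\omega_i)=\{1\}$. Then there exists a constant $C_l\in\mathbb{N}$ such that $|\mathcal{I}_\infty^\omega(n)|\le C_l\, n^{\frac{3^{l+2}-1}{2}}$ for all integers $n\ge 1$.
   Context: $T_3$ is the $3$-regular rooted tree; elements of $\mathrm{Sym}(3)$ act as rooted automorphisms $\tau(xw)=\tau(x)w$; for $g$ fixing the first level, $g=(g_1,g_2,g_3)$ lists the restrictions of $g$ to the three subtrees below the root, and every $g\in\mathrm{Aut}(T_3)$ is uniquely $g=(g_1,g_2,g_3)\tau$ with $\tau\in\mathrm{Sym}(3)$. Let $\sigma$ be the left shift on sequences. Define recursively $\beta_\omega\colon B\to\mathrm{Aut}(T_3)$ by $\beta_\omega(b)=(\omega_0(b),1,\beta_{\sigma(\omega)}(b))$, let $B_\omega=\beta_\omega(B)$ and $G_\omega=\langle A,B_\omega\rangle$. Equip $G_\omega$ with the word pseudonorm $|\cdot|_\omega$: $|g|_\omega$ is the minimum of $\sum_i|s_i|$ over all expressions $g=s_1\cdots s_k$ with $s_i\in A\cup B_\omega$, where elements of $A$ have length $0$ and nontrivial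 elements of $B_\omega$ have length $1$. Every $g\in G_{\sigma^\nu(\omega)}$ can be written $g=(g_1,g_2,g_3)\tau$ with $g_i\in G_{\sigma^{\nu+1}(\omega)}$, $\tau\in A$. Incompressible elements: set $\mathcal{I}_0^{\sigma^\nu(\omega)}=G_{\sigma^\nu(\omega)}$ and recursively $\mathcal{I}_k^{\sigma^\nu(\omega)}$ is the set of $g=(g_1,g_2,g_3)\tau\in G_{\sigma^\nu(\omega)}$ with $g_1,g_2,g_3\in\mathcal{I}_{k-1}^{\sigma^{\nu+1}(\omega)}$ and $\sum_{i=1}^3|g_i|_{\sigma^{\nu+1}(\omega)}=|g|_{\sigma^\nu(\omega)}$; then $\mathcal{I}_\infty^\omega=\bigcap_{k\ge1}\mathcal{I}_k^\omega$, and $\mathcal{I}_\infty^\omega(n)$ is the set of elements of $\mathcal{I}_\infty^\omega$ of length $|\cdot|_\omega$ equal to $n$. *)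

From Stdlib Require Import ClassicalEpsilon.
From mathcomp Require Import all_boot all_order all_algebra.
Set Implicit Arguments. Unset Strict Implicit. Unset Printing Implicit Defensive.
Import GRing.Theory.
Local Open Scope ring_scope.

(* Vertices of the 3-regular rooted tree T_3: finite words over the alphabet
   {0,1,2} (= the paper's {1,2,3}), represented by 'Z_3. *)
Definition word := seq 'Z_3.

(* Tree maps are functions on words; equality of automorphisms is extensional
   equality (=1). *)
Definition tmap := word -> word.

Definition Bgrp (m : nat) := 'rV['Z_3]_m.

(* A = <a> <= Sym(3), a = (1 2 3), identified with Z/3Z via a^k <-> k.
   rotw k is the rooted automorphism a^k : x w |-> (x + k) w. *)
Definition rotw (k : 'Z_3) (w : word) : word :=
  match w with [::] => [::] | x :: w' => (x + k) :: w' end.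

Definition omseq (m : nat) := nat -> Bgrp m -> 'Z_3.

Definition shift m (om : omseq m) : omseq m := fun i => om i.+1.

(* beta_omega(b) = (omega_0(b), 1, beta_{sigma omega}(b)) *)
Fixpoint beta m (om : omseq m) (b : Bgrp m) (w : word) : word :=
  match w with
  | [::] => [::]
  | x :: w' =>
      if x == 0 then x :: rotw (om 0%N b) w'
      else if x == 1 then x :: w'
      else x :: beta (shift om) b w'
  end.

Inductive gen (m : nat) := GA of 'Z_3 | GB of Bgrp m.

Definition gact m (om : omseq m) (s : gen m) : tmap :=
  match s with GA k => rotw k | GB b => beta om b end.

Fixpoint geval m (om : omseq m) (L : seq (gen m)) : tmap :=
  match L with
  | [::] => id
  | s :: L' => fun w => gact om s (geval om L' w)
  end.

Definition trivialB m (om : omseq m) (b : Bgrp m) : Prop :=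
  forall w, beta om b w = w.

Definition glen m (om : omseq m) (s : gen m) : nat :=
  match s with
  | GA _ => 0%N
  | GB b => if excluded_middle_informative (trivialB om b) then 0%N else 1%N
  end.

Definition cost m (om : omseq m) (L : seq (gen m)) : nat :=
  sumn (map (glen om) L).

Definition inG m (om : omseq m) (g : tmap) : Prop :=
  exists L, geval om L =1 g.

Definition wnorm m (om : omseq m) (g : tmap) (n : nat) : Prop :=
  (exists L, geval om L =1 g /\ cost om L = n) /\
  (forall L, geval om L =1 g -> (n <= cost om L)%N).

(* restriction (section) of g to the subtree below the first-level vertex x:
   g(x w) = g(x) g|_x(w) *)
Definition section (g : tmap) (x : 'Z_3) : tmap :=
  fun w => behead (g (x :: w)).

Fixpoint incomp (k : nat) m (om : omseq m) (g : tmap) : Prop :=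
  match k with
  | 0%N => inG om g
  | k'.+1 =>
      inG om g /\
      (forall x, incomp k' (shift om) (section g x)) /\
      exists n n0 n1 n2,
        [/\ wnorm om g n,
            wnorm (shift om) (section g 0) n0,
            wnorm (shift om) (section g 1) n1,
            wnorm (shift om) (section g 2) n2 &
            (n0 + n1 + n2)%N = n]
  end.

Definition incomp_inf m (om : omseq m) (g : tmap) : Prop :=
  forall k, (1 <= k)%N -> incomp k om g.

Definition incomp_inf_n m (om : omseq m) (n : nat) (g : tmap) : Prop :=
  incomp_inf om g /\ wnorm om g n.

(* "the set {g | P g} has at most N elements" (elements counted up to
   extensional equality of tree maps) *)
Definition card_le (P : tmap -> Prop) (N : nat) : Prop :=
  forall s : seq tmap,
    (forall i, (i < size s)%N -> P (nth id s i)) ->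
    (forall i j, (i < j < size s)%N -> ~ (nth id s i =1 nth id s j)) ->
    (size s <= N)%N.

From Stdlib Require Import ClassicalEpsilon.
From mathcomp Require Import all_boot all_order all_algebra zify ring.
Set Implicit Arguments. Unset Strict Implicit. Unset Printing Implicit Defensive.
Import GRing.Theory.
Local Open Scope ring_scope.

(* Every element of G_omega is a product of conjugates a^c beta(b) a^-c followed
   by some a^s, and a geodesic word of length n yields such a normal form with n
   letters.  For an incompressible element this normal form is reduced at every
   level: neighbouring conjugators differ (otherwise two letters merge), and the
   sections at the three first-level vertices, which are again normal forms,
   split the n letters among them without loss.  Two levels of reducedness force
   the conjugator sequence into a "V" shape c, c - 1, ..., c - a, c - a + 1, ...,
   leaving O(n) possibilities.  The conjugators of the sections are partial sums
   of the values om_0(b) of the letters, so these values can be read off the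
   sections except at six positions at most, and the deeper values om_1(b), ...
   are the corresponding data of the sections.  Hence the data (conjugators,
   om_0(b), ..., om_(k-1)(b)) of reduced normal forms of length n are determined
   by O(n) conjugator patterns, six values in Z/3 and the data of depth k - 1
   of the three sections, so they take at most C_k (n + 1)^(E_k) values with
   E_0 = 1 and E_(k+1) = 3 E_k + 1, i.e. E_k = (3^(k+1) - 1)/2.  For k = l + 1
   they determine the letters, since ker om_0, ..., ker om_l intersect
   trivially. *)

Lemma Z3_cases (x : 'Z_3) : [\/ x = 0, x = 1 | x = 2].
Proof.
by case: x => [[|[|[|//]]] ?]; [constructor 1|constructor 2|constructor 3]; apply: val_inj.
Qed.

Lemma rotw0 w : rotw 0 w = w.
Proof. by case: w => [|x w] //=; rewrite addr0. Qed.

Lemma rotwD a c w : rotw a (rotw c w) = rotw (c + a) w.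
Proof. by case: w => [|x w] //=; rewrite addrA. Qed.

Lemma rotwK a : cancel (rotw a) (rotw (- a)).
Proof. by move=> w; rewrite rotwD subrr rotw0. Qed.

(** * Normal forms *)

Section NormalForm.
Variable m : nat.
Implicit Types (om : omseq m) (b : Bgrp m).

Definition additive_seq om := forall i, {morph om i : x y / x + y}.

Lemma additive_shift om : additive_seq om -> additive_seq (shift om).
Proof. by move=> h i; apply: h. Qed.

Lemma betaD om b b' w : additive_seq om ->
  beta om b (beta om b' w) = beta om (b + b') w.
Proof.
elim: w om => [|x w IH] om h //=.
case: ifP => [/eqP->|h0] /=; first by rewrite rotwD h addrC.
case: ifP => [/eqP->|h1] //=.
by rewrite h0 h1 IH //; apply: additive_shift.
Qed.

(* The letter (c, b) stands for the conjugate a^c beta(b) a^-c, and the normal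
   form (W, s) for the product of the letters of W followed by a^s. *)
Definition letter := ('Z_3 * Bgrp m)%type.
Definition letter0 : letter := (0, 0).

Definition letter_act om (l : letter) : tmap :=
  fun w => rotw l.1 (beta om l.2 (rotw (- l.1) w)).

Definition nf_eval om (W : seq letter) (s : 'Z_3) : tmap :=
  fun w => foldr (letter_act om) (rotw s w) W.

Lemma letter_act_cons om l y v : letter_act om l (y :: v) =
  y :: (if y - l.1 == 0 then rotw (om 0%N l.2) v else if y - l.1 == 1 then v
        else beta (shift om) l.2 v).
Proof. by rewrite /letter_act /=; case: ifP => _; [|case: ifP => _]; rewrite /= subrK. Qed.

(* At the vertex y a letter (c, b) acts as the rotation a^(om_0 b) if y = c,
   trivially if y = c + 1, and as beta_(shift om)(b) if y = c + 2.  The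
   accumulator R collects the rotations met so far, which conjugate the
   remaining letters of the section. *)
Fixpoint nf_section om (y R : 'Z_3) (W : seq letter) : seq letter :=
  match W with
  | [::] => [::]
  | l :: W' => if y - l.1 == 0 then nf_section om y (R + om 0%N l.2) W'
               else if y - l.1 == 1 then nf_section om y R W'
               else (R, l.2) :: nf_section om y R W'
  end.

Fixpoint nf_section_rot om (y R : 'Z_3) (W : seq letter) : 'Z_3 :=
  match W with
  | [::] => R
  | l :: W' => if y - l.1 == 0 then nf_section_rot om y (R + om 0%N l.2) W'
               else nf_section_rot om y R W'
  end.

Lemma nf_eval0_cons om W y w :
  nf_eval om W 0 (y :: w) = y :: behead (nf_eval om W 0 (y :: w)).
Proof. by elim: W => [|l W IH] /=; rewrite ?addr0 // IH letter_act_cons. Qed.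

Lemma rotw_behead_nf_eval om W R y w :
  rotw R (behead (nf_eval om W 0 (y :: w))) =
  nf_eval (shift om) (nf_section om y R W) (nf_section_rot om y R W) w.
Proof.
elim: W R => [|l W IH] R //=.
rewrite nf_eval0_cons letter_act_cons /=.
case: ifP => h0; first by rewrite rotwD IH [om 0%N _ + R]addrC.
case: ifP => h1; first by rewrite -IH.
by rewrite /= -IH /letter_act /= rotwK.
Qed.

Lemma section_nf_eval om W s x :
  section (nf_eval om W s) x =1
  nf_eval (shift om) (nf_section om (x + s) 0 W) (nf_section_rot om (x + s) 0 W).
Proof.
move=> w; rewrite /section -rotw_behead_nf_eval rotw0.
suff -> : nf_eval om W s (x :: w) = nf_eval om W 0 ((x + s) :: w) by [].
by rewrite /nf_eval /= addr0.
Qed.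

Lemma nf_eval_merge om W1 W2 c b b' s : additive_seq om ->
  nf_eval om (W1 ++ (c, b) :: (c, b') :: W2) s =1 nf_eval om (W1 ++ (c, b + b') :: W2) s.
Proof.
move=> h w; elim: W1 => [|l W1 IH] /=; last by rewrite IH.
by rewrite /letter_act /= rotwK betaD.
Qed.

Fixpoint word_of_nf (W : seq letter) (s : 'Z_3) : seq (gen m) :=
  match W with
  | [::] => [:: GA m s]
  | l :: W' => GA m l.1 :: GB l.2 :: GA m (- l.1) :: word_of_nf W' s
  end.

Lemma geval_word_of_nf om W s : geval om (word_of_nf W s) =1 nf_eval om W s.
Proof. by move=> w; elim: W => [|l W IH] //=; rewrite IH. Qed.

Lemma cost_word_of_nf om W s : (cost om (word_of_nf W s) <= size W)%N.
Proof.
elim: W => [|l W IH] //=; rewrite /cost /= -/(cost om _) !add0n.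
by rewrite -[(size W).+1]add1n leq_add //; case: excluded_middle_informative.
Qed.

Lemma rotw_nf_eval om W s k w :
  rotw k (nf_eval om W s w) = nf_eval om [seq (l.1 + k, l.2) | l <- W] (s + k) w.
Proof.
elim: W => [|l W IH] /=; first by rewrite rotwD.
rewrite -IH /letter_act /= !rotwD; congr (rotw _ (beta _ _ (rotw _ _))).
by rewrite opprD addrCA subrr addr0.
Qed.

Fixpoint nf_of_word om (L : seq (gen m)) : seq letter * 'Z_3 :=
  match L with
  | [::] => ([::], 0)
  | GA k :: L' => let p := nf_of_word om L' in ([seq (l.1 + k, l.2) | l <- p.1], p.2 + k)
  | GB b :: L' => let p := nf_of_word om L' in
       (if glen om (GB b) == 0%N then p.1 else (0, b) :: p.1, p.2)
  end.

Lemma nf_of_wordE om L : geval om L =1 nf_eval om (nf_of_word om L).1 (nf_of_word om L).2.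
Proof.
move=> w; elim: L => [|g L IH] /=; first by rewrite rotw0.
case: g => [k|b] /=; first by rewrite IH rotw_nf_eval.
case: ifP => /eqP h /=; rewrite IH //; last by rewrite /letter_act /= oppr0 !rotw0.
by move: h; case: excluded_middle_informative => [tb|] // _; apply: tb.
Qed.

Lemma size_nf_of_word om L : (size (nf_of_word om L).1 <= cost om L)%N.
Proof.
elim: L => [|g L IH] //=; case: g => [k|b] /=; rewrite /cost /= -/(cost om _).
  by rewrite size_map.
case: ifP => /eqP h /=; first by rewrite h.
by move: h; case: excluded_middle_informative => //= _ _; rewrite add1n ltnS.
Qed.

Lemma wnorm_uniq om g n n' : wnorm om g n -> wnorm om g n' -> n = n'.
Proof.
move=> [[L [hL <-]] hmin] [[L' [hL' <-]] hmin'].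
by apply/eqP; rewrite eqn_leq hmin // hmin'.
Qed.

Lemma wnorm_le_size om g W s : nf_eval om W s =1 g ->
  forall n, wnorm om g n -> (n <= size W)%N.
Proof.
move=> hW n [_ hmin]; apply: leq_trans (cost_word_of_nf om W s).
by apply: hmin => w; rewrite geval_word_of_nf hW.
Qed.

Lemma geodesic_nf om g n : wnorm om g n ->
  exists W s, nf_eval om W s =1 g /\ size W = n.
Proof.
move=> hn; have [[L [hL hc]] _] := hn.
exists (nf_of_word om L).1, (nf_of_word om L).2.
have hW : nf_eval om (nf_of_word om L).1 (nf_of_word om L).2 =1 g.
  by move=> w; rewrite -nf_of_wordE hL.
split=> //; apply/eqP; rewrite eqn_leq (wnorm_le_size hW hn) andbT.
by rewrite -hc size_nf_of_word.
Qed.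

End NormalForm.

Arguments letter0 {m}.

(** * Incompressible elements have reduced normal forms *)

Definition in_section (y c : 'Z_3) : bool := (y - c != 0) && (y - c != 1).

Lemma in_section_partition (s c : 'Z_3) :
  (in_section (0 + s)%R c + in_section (1 + s)%R c + in_section (2 + s)%R c)%N = 1%N.
Proof. by move: s c; do 2 case=> [[|[|[|//]]] ?]. Qed.

Section Admissible.
Variable m : nat.
Implicit Types (om : omseq m) (W : seq (letter m)).

Fixpoint admissible k om W : Prop :=
  if k is k'.+1 then sorted (fun c c' : 'Z_3 => c != c') (map fst W) /\
     forall y, admissible k' (shift om) (nf_section om y 0 W)
  else True.

Lemma admissible_leq k k' om W : (k <= k')%N -> admissible k' om W -> admissible k om W.
Proof.
elim: k k' om W => [|k IH] [|k'] om W //= hk [h1 h2].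
by split=> // y; apply: IH (h2 y).
Qed.

Lemma size_nf_section om y R W :
  size (nf_section om y R W) = count (fun l : letter m => in_section y l.1) W.
Proof.
elim: W R => [|l W IH] R //=; rewrite /in_section.
by case: ifP => h0 /=; rewrite ?IH //; case: ifP => h1 /=; rewrite ?IH.
Qed.

Lemma size_nf_sections om (s R0 R1 R2 : 'Z_3) W :
  (size (nf_section om (0 + s)%R R0 W) + size (nf_section om (1 + s)%R R1 W)
   + size (nf_section om (2 + s)%R R2 W))%N = size W.
Proof.
rewrite !size_nf_section; elim: W => [|l W IH] //=.
have := in_section_partition s l.1; lia.
Qed.

Lemma geodesic_nf_sorted om g W s : additive_seq om ->
  nf_eval om W s =1 g -> wnorm om g (size W) ->
  sorted (fun c c' : 'Z_3 => c != c') (map fst W).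
Proof.
move=> hom hW hn; apply/(sortedP 0) => i; rewrite size_map => hi.
rewrite !(nth_map letter0) ?(ltnW hi) //.
have eW : W = take i W ++ nth letter0 W i :: nth letter0 W i.+1 :: drop i.+2 W.
  by rewrite -(drop_nth _ hi) -(drop_nth _ (ltnW hi)) cat_take_drop.
move: (nth letter0 W i) (nth letter0 W i.+1) eW => [c b] [c' b'] eW /=.
apply/eqP => ec; subst c'; rewrite eW in hW hn.
have hW' : nf_eval om (take i W ++ (c, b + b') :: drop i.+2 W) s =1 g.
  by move=> w; rewrite -nf_eval_merge // hW.
by have := wnorm_le_size hW' hn; rewrite !size_cat /= addnS ltnn.
Qed.

Lemma geodesic_nf_sections om g W s n0 n1 n2 :
  nf_eval om W s =1 g -> (n0 + n1 + n2)%N = size W ->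
  wnorm (shift om) (section g 0) n0 -> wnorm (shift om) (section g 1) n1 ->
  wnorm (shift om) (section g 2) n2 ->
  forall x, wnorm (shift om) (section g x) (size (nf_section om (x + s) 0 W)).
Proof.
move=> hW hsum hn0 hn1 hn2.
have hS (x : 'Z_3) : nf_eval (shift om) (nf_section om (x + s) 0 W)
                    (nf_section_rot om (x + s) 0 W) =1 section g x.
  by move=> w; rewrite -section_nf_eval /section hW.
have le0 := wnorm_le_size (hS 0) hn0.
have le1 := wnorm_le_size (hS 1) hn1.
have le2 := wnorm_le_size (hS 2) hn2.
set S0 := size _ in le0; set S1 := size _ in le1; set S2 := size _ in le2.
have e : (S0 + S1 + S2)%N = size W := size_nf_sections om s 0 0 0 W.
move=> x; case: (Z3_cases x) => ->.
- by have -> : size (nf_section om (0 + s) 0 W) = n0 by rewrite -/S0; lia.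
- by have -> : size (nf_section om (1 + s) 0 W) = n1 by rewrite -/S1; lia.
- by have -> : size (nf_section om (2 + s) 0 W) = n2 by rewrite -/S2; lia.
Qed.

Lemma admissible_of_incomp k om g W s : additive_seq om ->
  incomp k om g -> nf_eval om W s =1 g -> wnorm om g (size W) -> admissible k om W.
Proof.
elim: k om g W s => [|k IH] om g W s hom //=.
move=> [_ [hsec [n [n0 [n1 [n2 [hn hn0 hn1 hn2 en]]]]]]] hW hw.
have hsum : (n0 + n1 + n2)%N = size W by rewrite en; exact: wnorm_uniq hn hw.
split; first exact: geodesic_nf_sorted hW hw.
move=> y; rewrite -(subrK s y).
apply: (IH _ (section g (y - s)) _ (nf_section_rot om (y - s + s) 0 W)).
- exact: additive_shift.
- exact: hsec.
- by move=> w; rewrite -section_nf_eval /section hW.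
- exact: (geodesic_nf_sections hW hsum hn0 hn1 hn2 (y - s)).
Qed.

End Admissible.

(** * The conjugator sequence of a reduced normal form *)

Fixpoint vpattern (c : 'Z_3) (a n : nat) : seq 'Z_3 :=
  if n is n'.+1 then
    c :: (if a is a'.+1 then vpattern (c - 1) a' n' else vpattern (c + 1) 0 n')
  else [::].

Lemma vpatternS c a n : vpattern c a n.+1 =
  c :: (if a is a'.+1 then vpattern (c - 1) a' n else vpattern (c + 1) 0 n).
Proof. by []. Qed.

Lemma size_vpattern c a n : size (vpattern c a n) = n.
Proof. by elim: n c a => [|n IH] c [|a] //=; rewrite IH. Qed.

Lemma vpattern_min c a n : vpattern c a n = vpattern c (minn a n) n.
Proof.
elim: n c a => [|n IH] c [|a]; rewrite ?minn0 ?min0n //.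
by rewrite minnSS vpatternS [in RHS]vpatternS IH.
Qed.

Lemma Z3_neq (x y : 'Z_3) : x != y -> x = y + 1 \/ x = y - 1.
Proof.
move=> hxy; have e2 : (2 : 'Z_3) = -1 by apply: val_inj.
case: (Z3_cases (x - y)) => h.
- by move: hxy; rewrite -subr_eq0 h.
- by left; rewrite -h addrC subrK.
- by right; rewrite -e2 -h addrC subrK.
Qed.

Lemma vpatternP (cl : seq 'Z_3) :
  sorted (fun c c' => c != c') cl ->
  (forall i, (i.+2 < size cl)%N ->
     ~ (nth 0 cl i.+1 = nth 0 cl i + 1 /\ nth 0 cl i.+2 = nth 0 cl i)) ->
  exists c a, cl = vpattern c a (size cl).
Proof.
elim: cl => [|y cl IH] hs hp; first by exists 0, 0%N.
case: cl IH hs hp => [|z cl] IH hs hp; first by exists y, 0%N.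
have /andP [hyz hs'] := hs.
have [c0 [a ea]] := IH hs' (fun i => hp i.+1).
have ez : z = c0 by move: ea; case: a => [|a] [].
subst z; have hsz : size [:: y, c0 & cl] = (size (c0 :: cl)).+1 by [].
case/Z3_neq: hyz => ey.
- by exists y, a.+1; rewrite hsz vpatternS ey addrK -ey -ea.
case: a ea => [|a] ea; first by exists y, 0%N; rewrite hsz vpatternS ey subrK -ea.
case: cl {IH hs hs' hsz} ea hp => [|w cl] ea hp.
  by exists y, 0%N; rewrite /= ey subrK.
exfalso; apply: (hp 0%N isT).
have ew : w = c0 - 1 by move: ea; rewrite [size _]/= vpatternS vpatternS => -[].
by rewrite /= ew ey subrK.
Qed.

Section PrefixRotation.
Variable m : nat.
Implicit Types (om : omseq m) (W : seq (letter m)).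

Definition rot_prefix om (x : 'Z_3) W (j : nat) : 'Z_3 :=
  \sum_(l <- take j W | x - l.1 == 0) om 0%N l.2.

Lemma nth_map_fst W j : nth 0 (map fst W) j = (nth letter0 W j).1.
Proof. by elim: W j => [|l W IH] [|j] //=. Qed.

Lemma nf_sectionE om x R W : nf_section om x R W =
  [seq (R + rot_prefix om x W j, (nth letter0 W j).2)
  | j <- iota 0 (size W) & in_section x (nth 0 (map fst W) j)].
Proof.
elim: W R => [|l W IH] R //=.
have -> : iota 1 (size W) = map (addn 1) (iota 0 (size W)) by rewrite -iotaDl.
rewrite filter_map.
set F := filter _ (iota 0 (size W)).
have -> : F = [seq i <- iota 0 (size W) | in_section x (nth 0 (map fst W) i)].
  by apply: eq_filter => i.
have hR j : rot_prefix om x (l :: W) j.+1 =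
    (if x - l.1 == 0 then om 0%N l.2 else 0) + rot_prefix om x W j.
  by rewrite /rot_prefix take_cons big_cons; case: ifP => _ //; rewrite add0r.
rewrite /in_section; case: ifP => h0.
  by rewrite IH /= -map_comp; apply: eq_map => j /=; rewrite add1n hR h0 addrA.
case: ifP => h1.
  by rewrite IH /= -map_comp; apply: eq_map => j /=; rewrite add1n hR h0 add0r.
rewrite IH /= -map_comp /rot_prefix take0 big_nil addr0; congr (_ :: _).
by apply: eq_map => j /=; rewrite -/(rot_prefix om x (l :: W) j.+1) hR h0 add0r.
Qed.

Lemma map_fst_nf_section om x W :
  map fst (nf_section om x 0 W) =
  [seq rot_prefix om x W j | j <- iota 0 (size W) & in_section x (nth 0 (map fst W) j)].
Proof. by rewrite nf_sectionE -map_comp; apply: eq_map => j /=; rewrite add0r. Qed.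

Lemma map_snd_nf_section (T : Type) (f : Bgrp m -> T) om x R W :
  map (fun l : letter m => f l.2) (nf_section om x R W) =
  [seq f (nth letter0 W j).2 | j <- iota 0 (size W) & in_section x (nth 0 (map fst W) j)].
Proof. by rewrite nf_sectionE -map_comp. Qed.

Definition rot_at om x W j : 'Z_3 :=
  if nth 0 (map fst W) j == x then om 0%N (nth letter0 W j).2 else 0.

Lemma rot_prefixS om x W j : (j < size W)%N ->
  rot_prefix om x W j.+1 = rot_prefix om x W j + rot_at om x W j.
Proof.
move=> hj; rewrite /rot_prefix (take_nth letter0 hj) -cats1 big_cat /= big_cons big_nil.
by rewrite /rot_at nth_map_fst subr_eq0 [x == _]eq_sym; case: ifP; rewrite addr0.
Qed.

Lemma pattern_of_admissible om W : admissible 2 om W ->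
  exists c a, (a <= size W)%N /\ map fst W = vpattern c a (size W).
Proof.
move=> [hn hs].
have [c [a e]] : exists c a, map fst W = vpattern c a (size (map fst W)).
  apply: vpatternP => // i; rewrite size_map => hi [e1 e2].
  move eqy: (nth 0 (map fst W) i) e1 e2 => y e1 e2.
  have [f1 f2 f3 f4] : [/\ in_section (y - 1) y, ~~ in_section (y - 1) (y + 1),
      (y == y - 1) = false & (y + 1 == y - 1) = false].
    by move: y {eqy e1 e2}; case=> [[|[|[|//]]] ?].
  (* positions i and i + 2 become neighbours with equal conjugators in the
     section at y - 1 *)
  have [+ _] := hs (y - 1); rewrite map_fst_nf_section.
  have -> : iota 0 (size W) =
      iota 0 i ++ [:: i; i.+1; i.+2] ++ iota (i + 3) (size W - i.+3).
    have en : size W = (i + (3 + (size W - i.+3)))%N by rewrite addnA addn3 subnKC.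
    by rewrite {1}en iotaD add0n iotaD.
  rewrite !filter_cat !map_cat /= eqy e1 e2 f1 (negbTE f2) /=.
  rewrite sorted_cat_cons => /andP [_ /andP [+ _]].
  rewrite !rot_prefixS ?(ltnW hi) ?(ltnW (ltnW hi)) //.
  by rewrite /rot_at eqy e1 f3 f4 !addr0 eqxx.
exists c, (minn a (size W)); split; first exact: geq_minr.
by rewrite e size_map -vpattern_min.
Qed.

End PrefixRotation.

(** * Reading om_0 off the sections *)

(* Position i, carrying c, is the second or third entry of a window
   [c + 1; c; c - 1; c + 1] or [c + 1; c - 1; c; c + 1]: both ends of the window
   lie in the section at c, and the rotation accumulated in between is the
   om_0-value of the letter at i. *)
Definition sandwiched (cl : seq 'Z_3) (i : nat) : bool :=
  let c := nth 0 cl i in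
  [&& (0 < i)%N, (i.+2 < size cl)%N, nth 0 cl i.-1 == c + 1,
      nth 0 cl i.+1 == c - 1 & nth 0 cl i.+2 == c + 1]
  || [&& (1 < i)%N, (i.+1 < size cl)%N, nth 0 cl (i - 2) == c + 1,
      nth 0 cl i.-1 == c - 1 & nth 0 cl i.+1 == c + 1].

Lemma nth_vpattern_down c a n j : (j <= a)%N -> (j < n)%N ->
  nth 0 (vpattern c a n) j = c - j%:R.
Proof.
elim: n c a j => [|n IH] c a [|j] //= hja hjn; first by rewrite subr0.
by case: a hja => [|a] // hja; rewrite IH //; ring.
Qed.

Lemma nth_vpattern_up c a n j : (a <= j)%N -> (j < n)%N ->
  nth 0 (vpattern c a n) j = c - a%:R + (j - a)%:R.
Proof.
elim: n c a j => [|n IH] c a [|j] //= haj hjn.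
  by case: a haj => // _; rewrite subr0 addr0.
case: a haj => [|a] haj; first by rewrite IH // !subn0 subr0; ring.
by rewrite IH // subSS; ring.
Qed.

Lemma Z3_natr3 : (3%:R : 'Z_3) = 0.
Proof. by apply: val_inj. Qed.

Lemma sandwiched_vpattern c a n i : (i < n)%N ->
  i \notin [:: 0; a.-1; a; a.+1; n - 2; n - 1]%N -> sandwiched (vpattern c a n) i.
Proof.
move=> hin; rewrite !inE.
case/norP => /eqP h0; case/norP => /eqP h1; case/norP => /eqP h2.
case/norP => /eqP h3; case/norP => /eqP h4 /eqP h5.
rewrite /sandwiched size_vpattern.
have [hd|hu] : (i.+2 <= a)%N \/ (a.+2 <= i)%N by lia.
- apply/orP; left; rewrite !nth_vpattern_down; try lia.
  have hi0 : (0 < i)%N by lia.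
  have -> : (i.+2 < n)%N by lia.
  rewrite hi0; case: i hi0 {h0 h1 h2 h3 h4 h5 hd hin} => [//|k] _ /=.
  apply/and3P; split; apply/eqP; [ring | ring |].
  have -> : c - (k.+3)%:R = c - (k.+1)%:R + 1 - 3%:R by ring.
  by rewrite Z3_natr3 subr0.
- apply/orP; right; rewrite !nth_vpattern_up; try lia.
  have -> : (1 < i)%N by lia.
  have -> : (i.+1 < n)%N by lia.
  have [e ->] : exists e, i = (a + e.+2)%N by exists (i - a.+2)%N; lia.
  have -> : (a + e.+2 - 2 - a = e)%N by lia.
  have -> : ((a + e.+2).-1 - a = e.+1)%N by lia.
  have -> : ((a + e.+2).+1 - a = e.+3)%N by lia.
  have -> : ((a + e.+2) - a = e.+2)%N by lia.
  rewrite /=; apply/and3P; split; apply/eqP; [| ring | ring].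
  have -> : c - a%:R + e%:R = c - a%:R + (e.+2)%:R + 1 - 3%:R by ring.
  by rewrite Z3_natr3 subr0.
Qed.

Lemma count_not_sandwiched_vpattern c a n :
  (count (fun i => ~~ sandwiched (vpattern c a n) i) (iota 0 n) <= 6)%N.
Proof.
rewrite -size_filter.
have -> : 6%N = size [:: 0; a.-1; a; a.+1; n - 2; n - 1]%N by [].
apply: uniq_leq_size; first by rewrite filter_uniq // iota_uniq.
move=> i; rewrite mem_filter mem_iota add0n => /andP [hs /andP [_ hin]].
by apply/negPn/negP => hn; move: hs; rewrite sandwiched_vpattern.
Qed.

Section Determination.
Variable m : nat.
Implicit Types (om : omseq m) (W : seq (letter m)).

Definition ambiguous_rots om W : seq 'Z_3 :=
  [seq om 0%N (nth letter0 W i).2 | i <- iota 0 (size W) & ~~ sandwiched (map fst W) i].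

Section SameConjugators.
Variables (om : omseq m) (W W' : seq (letter m)).
Hypothesis eq_fst : map fst W = map fst W'.
Hypothesis eq_sections :
  forall x, map fst (nf_section om x 0 W) = map fst (nf_section om x 0 W').

Let cl := map fst W.

Lemma size_eq_fst : size W = size W'.
Proof. by rewrite -(size_map fst W) eq_fst size_map. Qed.

Lemma rot_prefix_eq x j : (j < size W)%N -> in_section x (nth 0 cl j) ->
  rot_prefix om x W j = rot_prefix om x W' j.
Proof.
move=> hj hx; have := eq_sections x.
rewrite !map_fst_nf_section -eq_fst -size_eq_fst => /eq_in_map; apply.
by rewrite mem_filter mem_iota hx.
Qed.

Lemma rot_at_window x k : (k.+3 < size W)%N ->
  nth 0 cl k = x + 1 -> nth 0 cl k.+3 = x + 1 ->
  rot_at om x W k + rot_at om x W k.+1 + rot_at om x W k.+2 =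
  rot_at om x W' k + rot_at om x W' k.+1 + rot_at om x W' k.+2.
Proof.
move=> hk e0 e3.
have hin : in_section x (x + 1) by move: x {e0 e3}; case=> [[|[|[|//]]] ?].
have hk' : (k.+3 < size W')%N by rewrite -size_eq_fst.
have := rot_prefix_eq (x := x) hk; rewrite e3 => /(_ hin).
have hk0 : (k < size W)%N by lia.
rewrite !rot_prefixS -?size_eq_fst; try lia.
by rewrite rot_prefix_eq ?e0 // -!addrA => /addrI.
Qed.

Lemma sandwiched_rot_eq i : sandwiched cl i ->
  om 0%N (nth letter0 W i).2 = om 0%N (nth letter0 W' i).2.
Proof.
rewrite /sandwiched /= size_map; move hx: (nth 0 cl i) => x hs.
have [n1 n2] : x + 1 != x /\ x - 1 != x by move: x {hs hx}; case=> [[|[|[|//]]] ?].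
case/orP: hs.
- case: i hx => [|k] hx /and5P [//= _ hk /eqP e0 /eqP e2 /eqP e3].
  have := rot_at_window hk e0 e3.
  rewrite /rot_at -eq_fst e0 hx e2 (negbTE n1) (negbTE n2) eqxx.
  by rewrite !add0r !addr0.
- case: i hx => [|[|k]] hx /and5P [//= _ hk /eqP e0 /eqP e1 /eqP e3].
  rewrite subn2 /= in e0 e1.
  have := rot_at_window hk e0 e3.
  rewrite /rot_at -eq_fst e0 e1 hx (negbTE n1) (negbTE n2) eqxx.
  by rewrite !add0r.
Qed.

Lemma om0_determined : ambiguous_rots om W = ambiguous_rots om W' ->
  forall i, (i < size W)%N -> om 0%N (nth letter0 W i).2 = om 0%N (nth letter0 W' i).2.
Proof.
move=> hamb i hi; case hs: (sandwiched cl i); first exact: sandwiched_rot_eq.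
move: hamb; rewrite /ambiguous_rots -size_eq_fst -eq_fst => /eq_in_map; apply.
by rewrite mem_filter hs mem_iota.
Qed.

End SameConjugators.
End Determination.

Section Code.
Variable m : nat.
Implicit Types (om : omseq m) (W : seq (letter m)).

Definition code k om W : seq 'Z_3 * seq (seq 'Z_3) :=
  (map fst W, [seq mkseq (om^~ l.2) k | l <- W]).

Lemma mkseq_shift om (b : Bgrp m) k :
  mkseq (om^~ b) k.+1 = om 0%N b :: mkseq ((shift om)^~ b) k.
Proof.
apply: (@eq_from_nth _ 0); first by rewrite size_mkseq [RHS]/= size_mkseq.
rewrite size_mkseq => -[|i] hi; rewrite nth_mkseq //.
by rewrite [RHS]/= nth_mkseq.
Qed.

Lemma code_of_sections k om W W' :
  map fst W = map fst W' -> ambiguous_rots om W = ambiguous_rots om W' ->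
  (forall y, code k (shift om) (nf_section om y 0 W) =
             code k (shift om) (nf_section om y 0 W')) ->
  code k.+1 om W = code k.+1 om W'.
Proof.
move=> eq_fst hamb hsec; rewrite /code eq_fst; congr (_, _).
have eq_sec x : map fst (nf_section om x 0 W) = map fst (nf_section om x 0 W').
  by case: (hsec x).
have esz := size_eq_fst eq_fst.
apply: (@eq_from_nth _ [::]); rewrite !size_map // => i hi.
rewrite !(nth_map letter0) -?esz // !mkseq_shift.
congr (_ :: _); first exact: om0_determined.
(* the letter i survives in the section at its conjugator minus one *)
set y := (nth letter0 W i).1 - 1.
have hy : in_section y (nth 0 (map fst W) i).
  by rewrite nth_map_fst /y; move: (nth _ W i).1; case=> [[|[|[|//]]] ?].
have [_] := hsec y.
rewrite !(map_snd_nf_section (fun b => mkseq ((shift om)^~ b) k)) -eq_fst -esz.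
by move/eq_in_map; apply; rewrite mem_filter mem_iota hi hy.
Qed.

Lemma code_inj l om W W' : additive_seq om ->
  (forall b : Bgrp m, (forall i, (i <= l)%N -> om i b = 0) -> b = 0) ->
  code l.+1 om W = code l.+1 om W' -> W = W'.
Proof.
move=> hom hl [eq_fst evals].
have esz := size_eq_fst eq_fst.
apply: (@eq_from_nth _ letter0) => // i hi.
have e1 : (nth letter0 W i).1 = (nth letter0 W' i).1 by rewrite -!nth_map_fst eq_fst.
have e2 j : (j <= l)%N -> om j (nth letter0 W i).2 = om j (nth letter0 W' i).2.
  move=> hj; have := congr1 (fun t => nth 0 (nth [::] t i) j) evals.
  by rewrite /= !(nth_map letter0) -?esz // !nth_mkseq.
have e3 : (nth letter0 W i).2 = (nth letter0 W' i).2.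
  apply/eqP; rewrite -subr_eq0; apply/eqP; apply: hl => j hj.
  have := hom j ((nth letter0 W i).2 - (nth letter0 W' i).2) (nth letter0 W' i).2.
  by rewrite subrK e2 // => h; apply: (addIr (om j (nth letter0 W' i).2)); rewrite add0r -h.
by move: e1 e3; case: (nth _ W i) => c b; case: (nth _ W' i) => c' b' /= -> ->.
Qed.

End Code.

(** * Counting *)

Definition covered (A : Type) (B : eqType) (P : A -> Prop) (F : A -> B) N :=
  exists LT : seq B, (size LT <= N)%N /\ forall a, P a -> F a \in LT.

Section Covering.
Variables (A : Type) (B C : eqType).
Implicit Types (P : A -> Prop) (F : A -> B) (G : A -> C).

Lemma covered_leq P F N N' : (N <= N')%N -> covered P F N -> covered P F N'.
Proof. by move=> hN [LT [hLT hP]]; exists LT; split=> //; apply: leq_trans hN. Qed.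

Lemma covered_comp (A' : Type) (P' : A' -> Prop) (g : A' -> A) P F N :
  (forall a, P' a -> P (g a)) -> covered P F N -> covered P' (F \o g) N.
Proof. by move=> hP [LT [hLT hF]]; exists LT; split=> // a /hP /hF. Qed.

Lemma covered_sub P P' F N :
  (forall a, P' a -> P a) -> covered P F N -> covered P' F N.
Proof. exact: (covered_comp (g := id)). Qed.

Lemma covered_determined P F (T : A -> C) N :
  (forall a a', P a -> P a' -> F a = F a' -> T a = T a') ->
  covered P F N -> covered P T N.
Proof.
move=> hdet [LF [hLF hin]].
suff [LT [hLT hT]] : exists LT : seq C, (size LT <= size LF)%N /\
    forall a, P a -> F a \in LF -> T a \in LT.
  by exists LT; split; [apply: leq_trans hLF | move=> a ha; apply/hT/hin].
elim: LF {hLF hin} => [|f LF [LT [hLT hT]]]; first by exists [::].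
case: (excluded_middle_informative (exists2 a, P a & F a = f)) => [[a0 ha0 ef]|hn].
  exists (T a0 :: LT); split=> //= a ha; rewrite inE => /orP [/eqP e|hi].
    by rewrite (hdet a a0) ?inE ?eqxx // ef.
  by rewrite inE hT ?orbT.
exists LT; split; first exact: leqW.
by move=> a ha; rewrite inE => /orP [/eqP e|]; [case: hn; exists a | apply: hT].
Qed.

Lemma covered_pair_dep P F G N1 N2 :
  covered P F N1 -> (forall x, covered (fun a => P a /\ F a = x) G N2) ->
  covered P (fun a => (F a, G a)) (N1 * N2).
Proof.
move=> [LF [hLF hF]] /(ClassicalEpsilon.choice _) [LG hLG].
exists [seq (x, y) | x <- LF, y <- LG x]; split.
  rewrite size_allpairs_dep; apply: leq_trans (leq_mul hLF (leqnn N2)).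
  elim: LF {hLF hF} => //= x LF IH.
  by rewrite mulSn leq_add // (proj1 (hLG x)).
move=> a ha; apply/allpairsPdep; exists (F a), (G a).
by split=> //; [apply: hF | apply: (proj2 (hLG (F a)))].
Qed.

Lemma covered_pair P F G N1 N2 :
  covered P F N1 -> covered P G N2 -> covered P (fun a => (F a, G a)) (N1 * N2).
Proof.
move=> hF [LG [hLG hin]]; apply: covered_pair_dep hF _ => x.
by exists LG; split=> // a [/hin].
Qed.

Lemma covered_image (T : finType) P F (f : T -> B) :
  (forall a, P a -> exists t, F a = f t) -> covered P F #|T|.
Proof.
move=> hf; exists [seq f t | t <- enum T]; rewrite size_map -cardE; split=> // a.
by move=> /hf [t ->]; apply: map_f; rewrite mem_enum.
Qed.

End Covering.

Lemma card_le_covered (A : Type) (B : eqType) (Q : tmap -> Prop) (P : A -> Prop)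
    (F : A -> B) (ev : A -> tmap) N :
  covered P F N -> (forall g, Q g -> exists2 a, P a & ev a =1 g) ->
  (forall a a', P a -> P a' -> F a = F a' -> ev a =1 ev a') -> card_le Q N.
Proof.
move=> [LT [hLT hF]] hQ hdet s hs hdist.
case: (posnP (size s)) => [-> //|s_gt0].
have [a0 _ _] := hQ _ (hs 0%N s_gt0).
have [rep hrep] : exists rep : nat -> A,
    forall i, (i < size s)%N -> P (rep i) /\ ev (rep i) =1 nth id s i.
  apply: (ClassicalEpsilon.choice (fun i a => (i < size s)%N -> P a /\ ev a =1 _)) => i.
  case: (ltnP i (size s)) => hi; last by exists a0.
  by have [a ha hev] := hQ _ (hs i hi); exists a.
have inj : {in iota 0 (size s) &, injective (F \o rep)}.
  move=> i j; rewrite !mem_iota !add0n => /andP [_ hi] /andP [_ hj] /= e.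
  have [[hPi hevi] [hPj hevj]] := (hrep i hi, hrep j hj).
  have eij : nth id s i =1 nth id s j.
    by move=> w; rewrite -hevi -hevj; apply: hdet.
  case: (ltngtP i j) => // hij; first by case: (hdist i j); rewrite ?hij.
  by case: (hdist j i); rewrite ?hij // => w; rewrite eij.
rewrite -(size_iota 0 (size s)) -(size_map (F \o rep)).
apply: leq_trans hLT; apply: uniq_leq_size; first by rewrite (map_inj_in_uniq inj) iota_uniq.
move=> x /mapP [i]; rewrite mem_iota add0n => /andP [_ hi] ->.
by apply: hF; case: (hrep i hi).
Qed.

Lemma pad_option_tuple (T : Type) (s : seq T) n : (size s <= n)%N ->
  exists t : n.-tuple (option T), s = pmap id t.
Proof.
move=> hs; have hsz : size (map Some s ++ nseq (n - size s)%N None) == n.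
  by rewrite size_cat size_map size_nseq subnKC.
exists (Tuple hsz); rewrite /= pmap_cat.
have -> : pmap id (nseq (n - size s)%N (@None T)) = [::] by elim: (n - size s)%N.
by rewrite cats0; elim: s {hs hsz} => //= x s <-.
Qed.

Fixpoint growth_exp k : nat := if k is k'.+1 then (3 * growth_exp k').+1 else 1%N.
Fixpoint growth_const k : nat :=
  if k is k'.+1 then (3 * 4 ^ 6 * growth_const k' ^ 3)%N else 3%N.

Lemma growth_exp_gt0 k : (0 < growth_exp k)%N.
Proof. by case: k. Qed.

Lemma growth_exp_closed k : growth_exp k = ((3 ^ k.+1 - 1) %/ 2)%N.
Proof.
have h : (growth_exp k).*2.+1 = (3 ^ k.+1)%N.
  by elim: k => [|k IH] //=; rewrite expnS -IH; lia.
by rewrite -h subn1 /= -muln2 mulnK.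
Qed.

Lemma growth_step k n (M := (growth_const k * n.+1 ^ growth_exp k)%N) :
  (3 * n.+1 * 4 ^ 6 * (M * (M * M)))%N =
  (growth_const k.+1 * n.+1 ^ growth_exp k.+1)%N.
Proof.
by rewrite /= [(n.+1 ^ _.+1)%N]expnS [(3 * growth_exp k)%N]mulnC expnM /M; ring.
Qed.

Section CountingCodes.
Variable m : nat.
Implicit Types (om : omseq m) (W : seq (letter m)).

Definition sized_admissible k om n W := admissible k om W /\ size W = n.

Lemma covered_conjugators om n :
  covered (sized_admissible 2 om n) (map fst) (3 * n.+1).
Proof.
have -> : (3 * n.+1 = #|{: 'Z_3 * 'I_n.+1}|)%N by rewrite card_prod !card_ord.
apply: (covered_image (f := fun t : 'Z_3 * 'I_n.+1 => vpattern t.1 t.2 n)).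
move=> W [/pattern_of_admissible [c [a [ha e]]] hn]; rewrite hn in ha e.
by exists (c, Ordinal (ha : (a < n.+1)%N)).
Qed.

Lemma covered_ambiguous om n :
  covered (sized_admissible 2 om n) (ambiguous_rots om) (4 ^ 6).
Proof.
have -> : (4 ^ 6 = #|{: 6.-tuple (option 'Z_3)}|)%N.
  by rewrite card_tuple card_option card_ord.
apply: (covered_image (f := fun t : 6.-tuple (option 'Z_3) => pmap id t)).
move=> W [/pattern_of_admissible [c [a [_ e]]] _].
apply: pad_option_tuple; rewrite size_map size_filter e.
exact: count_not_sandwiched_vpattern.
Qed.

Lemma covered_section_codes k om n y (x : seq 'Z_3 * seq 'Z_3) :
  (forall n', covered (sized_admissible k.+2 (shift om) n') (code k (shift om))
                      (growth_const k * n'.+1 ^ growth_exp k)) ->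
  covered (fun W => sized_admissible k.+3 om n W /\
                    (map fst W, ambiguous_rots om W) = x)
          (fun W => code k (shift om) (nf_section om y 0 W))
          (growth_const k * n.+1 ^ growth_exp k).
Proof.
move=> IH; set n' := minn n (count (in_section y) x.1).
apply: (@covered_leq _ _ _ _ (growth_const k * n'.+1 ^ growth_exp k)).
  by rewrite leq_mul // leq_exp2r ?growth_exp_gt0 // ltnS geq_minl.
apply: (covered_comp (g := nf_section om y 0)) (IH n').
move=> W [[[_ hadm] hn] ex]; split; first exact: hadm.
rewrite size_nf_section /n' -ex -count_map; apply/esym/minn_idPr.
by rewrite -hn -(size_map fst) count_size.
Qed.

Lemma covered_codes k om n :
  covered (sized_admissible k.+2 om n) (code k om)
          (growth_const k * n.+1 ^ growth_exp k).
Proof.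
elim: k om n => [|k IH] om n.
  apply: covered_determined (covered_leq _ (covered_conjugators om n)); last first.
    by rewrite expn1.
  have h V : [seq mkseq (om^~ l.2) 0 | l <- V] = [seq [::] | _ <- map fst V].
    by rewrite -map_comp.
  by move=> W W' _ _ e; rewrite /code !h e.
pose SC y W := code k (shift om) (nf_section om y 0 W).
have h2 W : sized_admissible k.+3 om n W -> sized_admissible 2 om n W.
  by case=> /(admissible_leq _) hadm hn; split=> //; apply: hadm.
pose F W := ((map fst W, ambiguous_rots om W), (SC 0 W, (SC 1 W, SC 2 W))).
apply: (covered_determined (F := F)).
  move=> W W' _ _ e; have proj T (f : _ -> T) : f (F W) = f (F W') by rewrite e.
  apply: code_of_sections; [exact: (proj _ (fun t => t.1.1)) |
                            exact: (proj _ (fun t => t.1.2)) |].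
  by move=> y; case: (Z3_cases y) => ->; [apply: (proj _ (fun t => t.2.1)) |
    apply: (proj _ (fun t => t.2.2.1)) | apply: (proj _ (fun t => t.2.2.2))].
rewrite -growth_step.
apply: (covered_pair_dep (covered_pair (covered_sub h2 (covered_conjugators om n))
                                       (covered_sub h2 (covered_ambiguous om n)))).
move=> x; apply: covered_pair; last apply: covered_pair.
all: by apply: covered_section_codes; apply: IH.
Qed.

Lemma admissible_nf_of_incomp_inf k om n g : additive_seq om ->
  incomp_inf_n om n g ->
  exists2 a : seq (letter m) * 'Z_3, sized_admissible k om n a.1 & nf_eval om a.1 a.2 =1 g.
Proof.
move=> hom [hinc hn]; have [W [s [hW hsz]]] := geodesic_nf hn.
exists (W, s) => //; split=> //.
apply: (admissible_leq (leqnSn k)); apply: admissible_of_incomp hom (hinc _ _) hW _ => //.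
by rewrite hsz.
Qed.

End CountingCodes.

Theorem mainTheorem2 (m : nat) (om : omseq m)
  (hom : forall i (x y : Bgrp m), om i (x + y) = om i x + om i y)
  (epi : forall i (z : 'Z_3), exists b : Bgrp m, om i b = z)
  (tail_ker : forall (k : nat) (b : Bgrp m),
      (forall i, (k <= i)%N -> om i b = 0) -> b = 0)
  (l : nat)
  (hl : forall b : Bgrp m, (forall i, (i <= l)%N -> om i b = 0) -> b = 0)
  (hlmin : forall l' : nat, (l' < l)%N ->
      exists b : Bgrp m, b <> 0 /\ forall i, (i <= l')%N -> om i b = 0) :
  exists C : nat, forall n : nat, (1 <= n)%N ->
    card_le (incomp_inf_n om n) (C * n ^ ((3 ^ (l + 2) - 1) %/ 2))%N.
Proof.
(* The upper bound only uses the additivity of om and hl. *)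
exists (3 * growth_const l.+1 * 2 ^ growth_exp l.+1)%N => n n_gt0.
apply: (card_le_covered (P := fun a => sized_admissible l.+3 om n a.1)
          (F := fun a => (a.2, code l.+1 om a.1)) (ev := fun a => nf_eval om a.1 a.2)).
- apply: (covered_leq _ (covered_pair (covered_image (f := @id 'Z_3) _)
                                      (covered_comp (g := fst) _ (covered_codes l.+1 om n)))).
  + rewrite card_ord addn2 -growth_exp_closed /= -!mulnA !leq_mul2l /=.
    by rewrite -expnMn leq_exp2r ?growth_exp_gt0 //; lia.
  + by move=> a _; exists a.2.
  + by move=> a.
- by move=> g; apply: admissible_nf_of_incomp_inf.
- move=> [W s] [W' s'] _ _ /eqP; rewrite xpair_eqE /=.
  by case/andP => /eqP -> /eqP /(code_inj hom hl) ->.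
Qed.
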